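(* Let $f(x)=\frac1n\sum_{t=1}^n f_t(x)$ where each $f_t:\mathbb{R}^d\to\mathbb{R}$ is convex and continuously differentiable, and suppose there are positive semidefinite matrices $Q^1,\dots,Q^m$ such that for all $t\in[n]$, $j\in[m]$ and $x,y\in\mathbb{R}^d$, $\|\nabla^{(j)} f_t(x)-\nabla^{(j)} f_t(y)\|^2\le\|x-y\|^2_{Q^j}$. Then for all $j\in[m]$ and $x,y$, $\|\nabla^{(j)} f(x)-\nabla^{(j)} f(y)\|^2\le\|x-y\|^2_{Q^j}$; consequently, with $L^2=2\|\tilde Q\|$, $f$ satisfies for all $x,y$: $f(y)-f(x)\le\langle\nabla f(x),y-x\rangle+\frac L2\|y-x\|^2$ and $\|\nabla f(y)-\nabla f(x)\|^2\le 2L(f(y)-f(x)-\langle\nabla f(x),y-x\rangle)$.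
   Context: The coordinates $\{1,\dots,d\}$ are partitioned into $m$ consecutive blocks $\mathcal{S}^1,\dots,\mathcal{S}^m$; $\nabla^{(j)}$ denotes the block-$j$ part of a gradient. For a PSD matrix $Q$, $\|x\|_Q^2=x^\top Qx$. For a $d\times d$ matrix $Q$, $(Q)_{\ge j}$ is obtained by zeroing all rows and columns indexed by blocks $1,\dots,j-1$. $\tilde Q=\sum_{j=1}^m[(Q^j)_{\ge j}+(Q^j)_{\ge j+1}]$ and $L^2=2\|\tilde Q\|<\infty$ (operator norm). *)

From HB Require Import structures.
From mathcomp Require Import all_boot all_order all_algebra.
From mathcomp Require Import all_classical all_reals all_analysis.
Set Implicit Arguments. Unset Strict Implicit. Unset Printing Implicit Defensive.
Import Order.TTheory GRing.Theory Num.Theory.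
Import numFieldNormedType.Exports.
Local Open Scope classical_set_scope.
Local Open Scope ring_scope.

Definition dotv (R : realType) (d : nat) (u v : 'rV[R]_d) : R :=
  \sum_(i < d) u 0 i * v 0 i.
Definition sqnorm (R : realType) (d : nat) (v : 'rV[R]_d) : R := dotv v v.

Definition qnorm2 (R : realType) (d : nat) (Q : 'M[R]_d) (x : 'rV[R]_d) : R :=
  (x *m Q *m x^T) 0 0.

Definition psd (R : realType) (d : nat) (Q : 'M[R]_d) : Prop :=
  Q^T = Q /\ forall x : 'rV[R]_d, 0 <= qnorm2 Q x.

(* blk : 'I_d -> 'I_m assigns each coordinate its block; the blocks are
   consecutive (blk nondecreasing) and form a partition into m (nonempty)
   blocks (blk surjective). *)
Definition consecutive_blocks (d m : nat) (blk : 'I_d -> 'I_m) : Prop :=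
  (forall i k : 'I_d, (i <= k)%N -> (blk i <= blk k)%N) /\
  (forall j : 'I_m, exists i : 'I_d, blk i = j).

Definition blocksq (R : realType) (d m : nat) (blk : 'I_d -> 'I_m)
  (j : 'I_m) (v : 'rV[R]_d) : R :=
  \sum_(i < d | blk i == j) v 0 i ^+ 2.

Definition trunc_ge (R : realType) (d m : nat) (blk : 'I_d -> 'I_m)
  (j : nat) (Q : 'M[R]_d) : 'M[R]_d :=
  \matrix_(i, k) (if (j <= blk i)%N && (j <= blk k)%N then Q i k else 0).

Definition Qtilde (R : realType) (d m : nat) (blk : 'I_d -> 'I_m)
  (Q : 'I_m -> 'M[R]_d) : 'M[R]_d :=
  \sum_(j < m) (trunc_ge blk j (Q j) + trunc_ge blk j.+1 (Q j)).

Definition opnorm (R : realType) (d : nat) (A : 'M[R]_d) : R :=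
  sup [set y : R | exists x : 'rV[R]_d,
         sqnorm x <= 1 /\ y = Num.sqrt (sqnorm (x *m A^T))].

Definition grad (R : realType) (d : nat) (f : 'rV[R]_d -> R) (x : 'rV[R]_d)
  : 'rV[R]_d :=
  \row_(i < d) ('D_(delta_mx 0 i) f x).

Definition convex_fun (R : realType) (d : nat) (f : 'rV[R]_d -> R) : Prop :=
  forall (x y : 'rV[R]_d) (a : R), 0 <= a <= 1 ->
    f (a *: x + (1 - a) *: y) <= a * f x + (1 - a) * f y.

Definition C1 (R : realType) (d : nat) (f : 'rV[R]_d -> R) : Prop :=
  (forall x, differentiable f x) /\ continuous (grad f).

From HB Require Import structures.
From mathcomp Require Import all_boot all_order all_algebra.
From mathcomp Require Import all_classical all_reals all_analysis.
From mathcomp Require Import ring lra.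
Set Implicit Arguments. Unset Strict Implicit. Unset Printing Implicit Defensive.
Import Order.TTheory GRing.Theory Num.Theory.
Import numFieldNormedType.Exports.
Local Open Scope classical_set_scope.
Local Open Scope ring_scope.

(* 1. Averaging: the block-j part of grad f is the mean of those of the
      grad F_t, and (mean)^2 <= mean of squares coordinatewise, so f inherits
      the bounds |grad^(j) f(x) - grad^(j) f(y)|^2 <= ||x - y||_{Q^j}^2.
   2. Descent lemma: write f(y) - f(x) as a telescoping sum over blocks, the
      j-th term switching on the block-j coordinates of h = y - x.  Along that
      segment the derivative excess is bounded by Young's inequality and the
      block bound, which is affine in the position by convexity of the psd
      form Q^j; integrating (mean value theorem) and summing over j yields
      D_f(x, y) <= al/2 |h|^2 + ||h||_{tilde Q}^2 / (4 al) for every al > 0.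
      Bounding ||h||_{tilde Q}^2 by ||tilde Q|| |h|^2 and optimizing al gives
      D_f(x, y) <= L/2 |h|^2 with L^2 = 2 ||tilde Q||.
   3. Cocoercivity: for convex f, the descent lemma implies
      |grad f(y) - grad f(x)|^2 <= 2 L D_f(x, y) (classical argument).  The blocks need not be consecutive. *)

Section EuclideanAlgebra.
Variables (R : realType) (d : nat).
Implicit Types (u v w h : 'rV[R]_d) (A : 'M[R]_d).

Lemma dotvC u v : dotv u v = dotv v u.
Proof. by apply: eq_bigr => i _; rewrite mulrC. Qed.

Lemma dotvBl u v w : dotv (u - v) w = dotv u w - dotv v w.
Proof. by rewrite /dotv -sumrB; apply: eq_bigr => i _; rewrite !mxE; ring. Qed.

Lemma dotvBr u v w : dotv u (v - w) = dotv u v - dotv u w.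
Proof. by rewrite dotvC dotvBl !(dotvC u). Qed.

Lemma dotvZr u v (c : R) : dotv u (c *: v) = c * dotv u v.
Proof. by rewrite /dotv mulr_sumr; apply: eq_bigr => i _; rewrite !mxE mulrCA. Qed.

Lemma sqnormZ v (c : R) : sqnorm (c *: v) = c ^+ 2 * sqnorm v.
Proof. by rewrite /sqnorm dotvZr dotvC dotvZr; ring. Qed.

Lemma sqnorm_ge0 u : 0 <= sqnorm u.
Proof. by apply: sumr_ge0 => i _; rewrite -expr2 sqr_ge0. Qed.

Lemma sqnorm_eq0 u : sqnorm u = 0 -> u = 0.
Proof.
move=> /eqP; rewrite psumr_eq0 => [/allP u0|i _]; last by rewrite -expr2 sqr_ge0.
apply/rowP => i; rewrite mxE; have /implyP := u0 i (mem_index_enum i).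
by move=> /(_ isT); rewrite mulf_eq0 orbb => /eqP.
Qed.

Lemma dotv_young u w (al : R) : 0 < al ->
  dotv u w <= (al * sqnorm w + sqnorm u / al) / 2.
Proof.
move=> al0; rewrite /sqnorm /dotv mulr_sumr mulr_suml -big_split mulr_suml.
apply: ler_sum => i _.
have : 0 <= (al * w 0 i - u 0 i) ^+ 2 / al by rewrite divr_ge0 ?sqr_ge0 ?ltW.
have -> : (al * w 0 i - u 0 i) ^+ 2 / al =
    al * (w 0 i * w 0 i) + u 0 i * u 0 i / al - 2 * (u 0 i * w 0 i).
  by field; rewrite gt_eqF.
rewrite /=; lra.
Qed.

Lemma qnorm2E A h : qnorm2 A h = \sum_i \sum_k h 0 i * A i k * h 0 k.
Proof.
rewrite /qnorm2 !mxE exchange_big /=; apply: eq_bigr => k _.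
by rewrite !mxE mulr_suml.
Qed.

Lemma qnorm2_dot A h : qnorm2 A h = dotv (h *m A^T) h.
Proof.
rewrite qnorm2E /dotv; apply: eq_bigr => i _.
by rewrite !mxE mulr_suml; apply: eq_bigr => k _; rewrite !mxE; ring.
Qed.

Lemma qnorm2D A1 A2 h : qnorm2 (A1 + A2) h = qnorm2 A1 h + qnorm2 A2 h.
Proof.
rewrite !qnorm2E -big_split /=; apply: eq_bigr => i _.
by rewrite -big_split /=; apply: eq_bigr => k _; rewrite !mxE; ring.
Qed.

Lemma qnorm2_sum n (A : 'I_n -> 'M[R]_d) h :
  qnorm2 (\sum_(j < n) A j) h = \sum_(j < n) qnorm2 (A j) h.
Proof.
elim/big_ind2: _ => [|B1 b1 B2 b2 <- <-|//]; last exact: qnorm2D.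
by rewrite qnorm2E big1 // => i _; rewrite big1 // => k _; rewrite mxE; ring.
Qed.

Lemma qnorm2_convex A u w (t : R) : psd A -> 0 <= t <= 1 ->
  qnorm2 A ((1 - t) *: u + t *: w) <= (1 - t) * qnorm2 A u + t * qnorm2 A w.
Proof.
move=> [_ A_ge0] /andP[t0 t1].
have -> : qnorm2 A ((1 - t) *: u + t *: w) =
    (1 - t) * qnorm2 A u + t * qnorm2 A w - t * (1 - t) * qnorm2 A (u - w).
  rewrite !qnorm2E !mulr_sumr -big_split -sumrB /=; apply: eq_bigr => i _.
  rewrite !mulr_sumr -big_split -sumrB /=; apply: eq_bigr => k _.
  by rewrite !mxE; ring.
have := A_ge0 (u - w); have : 0 <= t * (1 - t) by apply: mulr_ge0; lra.
nra.
Qed.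

End EuclideanAlgebra.

Section ScalarFacts.
Variable R : realType.

(* If X <= (al S + c^2 S / al) / 2 for every al > 0, then X <= c S: the
   optimal choice is al = c (and al -> 0 when c = 0). *)
Lemma young_optimum (X S c : R) : 0 <= S -> 0 <= c ->
  (forall al, 0 < al -> X <= (al * S + c ^+ 2 * S / al) / 2) -> X <= c * S.
Proof.
move=> S0 c0 hX; have [cp|cn] := ltrP 0 c.
  have -> : c * S = (c * S + c ^+ 2 * S / c) / 2 by field; rewrite gt_eqF.
  exact: hX.
have c_eq0 : c = 0 by lra.
rewrite c_eq0 mul0r; have [//|Xp] := lerP X 0.
set a := X / (S + 1).
have a0 : 0 < a by apply: divr_gt0; lra.
have aS : a * S = X - a by rewrite /a; field; lra.
by have := hX a a0; rewrite c_eq0 expr0n /= !mul0r addr0 aS; lra.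
Qed.

Lemma sqr_mean_le n (a : 'I_n -> R) : (0 < n)%N ->
  (n%:R^-1 * \sum_t a t) ^+ 2 <= n%:R^-1 * \sum_t a t ^+ 2.
Proof.
move=> n0; have N0 : 0 < n%:R :> R by rewrite ltr0n.
set mu := n%:R^-1 * \sum_t a t.
have sum_a : \sum_t a t = mu * n%:R by rewrite /mu mulrC mulrA mulfV ?mul1r ?gt_eqF.
have : 0 <= \sum_t (a t - mu) ^+ 2 by apply: sumr_ge0 => t _; apply: sqr_ge0.
have -> : \sum_t (a t - mu) ^+ 2 =
    \sum_t a t ^+ 2 - 2 * mu * \sum_t a t + mu ^+ 2 * n%:R.
  rewrite (eq_bigr (fun t => a t ^+ 2 + ((- (2 * mu)) * a t + mu ^+ 2)));
    last by move=> t _; ring.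
  by rewrite !big_split /= -mulr_sumr sumr_const card_ord -mulr_natr; ring.
rewrite sum_a => H; rewrite mulrC ler_pdivlMr //; nra.
Qed.

Lemma is_derive_quadratic (k1 k2 t : R) :
  is_derive t 1 (fun s : R => k1 * s + k2 * (s * s)) (k1 + k2 * (2 * t)).
Proof.
have -> : (fun s : R => k1 * s + k2 * (s * s)) =
    (k1 \*: (id : R -> R)) + (k2 \*: ((id : R -> R) * id)) by apply/funext.
apply: is_derive_eq.
by rewrite /= -[k1%:A]/(k1 * 1) -[t%:A]/(t * 1) -[k2 *: _]/(k2 * _); ring.
Qed.

(* Integrating a derivative bound a + b t over [0, 1], via the mean value
   theorem applied to phi minus the primitive of a + b t. *)
Lemma increment_le_affine (phi dphi : R -> R) (a b : R) :
  (forall t : R, is_derive t 1 phi (dphi t)) ->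
  (forall t, 0 <= t <= 1 -> dphi t <= a + b * t) ->
  phi 1 - phi 0 <= a + b / 2.
Proof.
move=> dphiE dphi_le.
pose th := phi - (fun s : R => a * s + b / 2 * (s * s)).
have dth (t : R) : is_derive t 1 th (dphi t - (a + b / 2 * (2 * t))).
  by apply: is_deriveB; exact: is_derive_quadratic.
have th_cont : {within `[0, 1], continuous th}.
  apply: continuous_subspaceT => s; apply: differentiable_continuous.
  by apply/derivable1_diffP; case: (dth s).
have [t t01 th_mvt] := MVT_segment ler01 (fun s _ => dth s) th_cont.
rewrite subr0 mulr1 in th_mvt.
have th_inc : phi 1 - (a * 1 + b / 2 * (1 * 1)) - (phi 0 - (a * 0 + b / 2 * (0 * 0)))
    = dphi t - (a + b / 2 * (2 * t)) := th_mvt.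
move: t01; rewrite in_itv /= => /andP[t0 t1].
have := dphi_le t; rewrite t0 t1 => /(_ isT); lra.
Qed.

End ScalarFacts.

Section OperatorNorm.
Variables (R : realType) (d : nat).
Implicit Types (h : 'rV[R]_d) (A : 'M[R]_d).

Definition opnorm_set A : set R := [set y : R | exists x : 'rV[R]_d,
  sqnorm x <= 1 /\ y = Num.sqrt (sqnorm (x *m A^T))].

(* Entrywise, |(x A^T)_k| <= sum_i (1 + A_ki^2) / 2 on the unit ball, so the
   supremum defining opnorm is taken over a bounded set. *)
Lemma opnorm_set_ub A : has_ubound (opnorm_set A).
Proof.
pose c k := \sum_i (1 + A k i ^+ 2) / 2.
exists (Num.sqrt (\sum_k c k ^+ 2)) => y [x [x1 ->]].
rewrite ler_sqrt; last by apply: sumr_ge0 => k _; apply: sqr_ge0.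
apply: ler_sum => k _.
have x_bnd i : -1 <= x 0 i <= 1.
  have : x 0 i * x 0 i <= 1.
    apply: le_trans x1; rewrite /sqnorm /dotv (bigD1 i) //= lerDl.
    by apply: sumr_ge0 => l _; rewrite -expr2 sqr_ge0.
  by move=> H; apply/andP; split; nra.
have entry_le : `|(x *m A^T) 0 k| <= c k.
  rewrite ler_norml mxE /c -sumrN; apply/andP; split; apply: ler_sum => i _;
    rewrite mxE; have /andP[xa xb] := x_bnd i;
    have := sqr_ge0 (x 0 i - A k i); have := sqr_ge0 (x 0 i + A k i);
    rewrite !expr2; nra.
by move: entry_le; rewrite ler_norml => /andP[lo hi]; rewrite expr2; nra.
Qed.

Lemma opnorm_ge0 A : 0 <= opnorm A.
Proof.
apply: (ub_le_sup (opnorm_set_ub A)); exists 0; split.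
  by rewrite /sqnorm /dotv big1 // => i _; rewrite mxE mul0r.
by rewrite mul0mx /sqnorm /dotv big1 ?sqrtr0 // => i _; rewrite mxE mul0r.
Qed.

(* |h A^T|^2 <= opnorm(A)^2 |h|^2, by rescaling h to the unit sphere. *)
Lemma sqnorm_mul_le_opnorm A h : sqnorm (h *m A^T) <= opnorm A ^+ 2 * sqnorm h.
Proof.
have [h_le0|h_gt0] := lerP (sqnorm h) 0.
  have -> : h = 0 by apply: sqnorm_eq0; apply/le_anti; rewrite h_le0 sqnorm_ge0.
  by rewrite mul0mx /sqnorm /dotv big1 ?mulr0 // => i _; rewrite mxE mul0r.
set r := Num.sqrt (sqnorm h).
have r0 : 0 < r by rewrite sqrtr_gt0.
have r2 : r ^+ 2 = sqnorm h by rewrite sqr_sqrtr // sqnorm_ge0.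
have r_in : opnorm_set A (Num.sqrt (sqnorm ((r^-1 *: h) *m A^T))).
  exists (r^-1 *: h); split => //; rewrite sqnormZ -r2 exprVn mulVf //.
  by rewrite expf_neq0 // gt_eqF.
have := ub_le_sup (opnorm_set_ub A) r_in; rewrite -scalemxAl sqnormZ => H.
have H2 : r^-1 ^+ 2 * sqnorm (h *m A^T) <= opnorm A ^+ 2.
  rewrite -[_ * _]sqr_sqrtr; last by rewrite mulr_ge0 ?sqr_ge0 ?sqnorm_ge0.
  by rewrite lerXn2r ?nnegrE ?sqrtr_ge0 ?opnorm_ge0.
by rewrite -r2 -ler_pdivrMr ?exprn_gt0 // mulrC -exprVn.
Qed.

(* ||h||_A^2 <= opnorm(A) |h|^2, from Young's inequality optimized. *)
Lemma qnorm2_le_opnorm A h : qnorm2 A h <= opnorm A * sqnorm h.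
Proof.
rewrite qnorm2_dot; apply: young_optimum; rewrite ?sqnorm_ge0 ?opnorm_ge0 //.
move=> al al0; apply: le_trans (dotv_young _ _ al0) _.
have : sqnorm (h *m A^T) / al <= opnorm A ^+ 2 * sqnorm h / al.
  by apply: ler_wpM2r; [rewrite invr_ge0 ltW | exact: sqnorm_mul_le_opnorm].
lra.
Qed.

End OperatorNorm.

Section Calculus.
Variables (R : realType) (d : nat).
Implicit Types (f : 'rV[R]_d -> R) (x v p b : 'rV[R]_d).

Lemma derive_grad f x v : differentiable f x -> 'D_v f x = dotv (grad f x) v.
Proof.
move=> df; rewrite deriveE // {1}(row_sum_delta v) linear_sum /dotv.
by apply: eq_bigr => i _; rewrite linearZ /= mxE deriveE // mulrC.
Qed.

Lemma is_derive_line f p b (t : R) : (forall x, differentiable f x) ->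
  is_derive t 1 (fun s : R => f (p + s *: b)) ('D_b f (p + t *: b)).
Proof.
move=> df.
have quotient_eq : (fun h : R => h^-1 *: (((fun s : R => f (p + s *: b)) \o shift t) (h *: 1)
                                  - f (p + t *: b)))
  = (fun h => h^-1 *: ((f \o shift (p + t *: b)) (h *: b) - f (p + t *: b))).
  apply/funext => h /=; congr (_ *: (f _ - _)).
  by apply/rowP => i; rewrite !mxE /= -[h%:A]/(h * 1) mulr1; ring.
by constructor; rewrite /derivable /derive quotient_eq //; exact: diff_derivable.
Qed.

(* The difference quotients at 0 in direction w - z are bounded by
   f w - f z on both sides of 0 (using convexity on [z, w] for h > 0, and on
   [z + h (w - z), w] for h < 0). *)
Lemma convex_first_order f z w : convex_fun f -> differentiable f z ->
  f z + dotv (grad f z) (w - z) <= f w.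
Proof.
move=> cf dfz; set v := w - z.
rewrite -derive_grad //.
suff : 'D_v f z <= f w - f z by lra.
apply: limr_le; first exact: diff_derivable.
near=> h.
have h0 : h != 0 by near: h; exact: nbhs_dnbhs_neq.
have h1 : `|h| < 1.
  near: h; apply: filterS (dnbhs_ball 0 ltr01) => y [/= + _].
  by rewrite /ball /= sub0r normrN.
rewrite /= -[h^-1 *: _]/(h^-1 * _).
set Fh := f (h *: v + z).
have [hp|hn] := ltrP 0 h.
  have := cf w z h; rewrite ltW //= ltW; last by move: h1; rewrite gtr0_norm.
  have -> : h *: w + (1 - h) *: z = h *: v + z.
    by apply/rowP => i; rewrite /v !mxE; ring.
  move=> /(_ isT); rewrite -/Fh => H.
  by rewrite mulrC ler_pdivrMr //; lra.
have hneg : h < 0 by rewrite lt_neqAle h0 hn.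
have hm1 : -1 < h by move: h1; rewrite ltr0_norm // ltrNl.
set a := (1 - h)^-1.
have a0 : 0 < a by rewrite invr_gt0; lra.
have ah : a * (1 - h) = 1 by rewrite mulVf //; apply/eqP => E; lra.
have a1 : a <= 1.
  have : a * (1 - h) - a = - a * h by ring.
  by rewrite ah => E; nra.
have := cf (h *: v + z) w a; rewrite ltW //= a1.
have -> : a *: (h *: v + z) + (1 - a) *: w = z.
  by apply/rowP => i; rewrite /v !mxE /a; field; apply/eqP => E; lra.
move=> /(_ isT) H.
have H2 : (1 - h) * f z <= Fh - h * f w.
  have -> : Fh - h * f w = (1 - h) * (a * Fh + (1 - a) * f w).
    have -> : (1 - h) * (a * Fh + (1 - a) * f w) =
        (a * (1 - h)) * Fh + (1 - h - a * (1 - h)) * f w by ring.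
    by rewrite ah; ring.
  by apply: ler_wpM2l => //; lra.
have -> : h^-1 * (Fh - f z) = (f z - Fh) / (- h) by rewrite invrN; ring.
by rewrite ler_pdivrMr; [nra | lra].
Unshelve. all: by end_near.
Qed.

End Calculus.

Section Blocks.
Variables (R : realType) (d m : nat) (blk : 'I_d -> 'I_m).
Implicit Types (g h : 'rV[R]_d) (A : 'M[R]_d).

Definition tail_blocks (k : nat) h : 'rV[R]_d :=
  \row_i (if (k <= blk i)%N then h 0 i else 0).

Definition block_part (j : 'I_m) h : 'rV[R]_d :=
  \row_i (if blk i == j then h 0 i else 0).

Definition block_lipschitz (f : 'rV[R]_d -> R) (Q : 'I_m -> 'M[R]_d) : Prop :=
  forall j x y, blocksq blk j (grad f x - grad f y) <= qnorm2 (Q j) (x - y).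

Lemma tail_blocks0 h : tail_blocks 0 h = h.
Proof. by apply/rowP => i; rewrite !mxE. Qed.

Lemma tail_blocks_last h : tail_blocks m h = 0.
Proof. by apply/rowP => i; rewrite !mxE leqNgt ltn_ord. Qed.

Lemma tail_blocksS (j : 'I_m) h :
  tail_blocks j h = tail_blocks j.+1 h + block_part j h.
Proof.
apply/rowP => i; rewrite !mxE; have [->|ne] := eqVneq (blk i) j.
  by rewrite leqnn ltnn add0r.
rewrite addr0 ltn_neqAle; suff -> : (j : nat) != blk i by [].
by apply: contra_neq ne => /val_inj.
Qed.

Lemma tail_blocks_segment (j : 'I_m) h (t : R) :
  tail_blocks j.+1 h + t *: block_part j h =
  (1 - t) *: tail_blocks j.+1 h + t *: tail_blocks j h.
Proof. by rewrite (tail_blocksS j h); apply/rowP => i; rewrite !mxE; ring. Qed.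

Lemma qnorm2_tail A k h : qnorm2 A (tail_blocks k h) = qnorm2 (trunc_ge blk k A) h.
Proof.
rewrite !qnorm2E; apply: eq_bigr => i _; apply: eq_bigr => l _; rewrite !mxE.
by case: (k <= blk i)%N; case: (k <= blk l)%N; rewrite /= ?(mul0r, mulr0).
Qed.

Lemma qnorm2_Qtilde (Q : 'I_m -> 'M[R]_d) h :
  qnorm2 (Qtilde blk Q) h =
  \sum_j (qnorm2 (Q j) (tail_blocks j.+1 h) + qnorm2 (Q j) (tail_blocks j h)).
Proof.
rewrite /Qtilde qnorm2_sum; apply: eq_bigr => j _.
by rewrite qnorm2D !qnorm2_tail addrC.
Qed.

Lemma dotv_block_split g h : dotv g h = \sum_j dotv g (block_part j h).
Proof.
rewrite /dotv exchange_big /=; apply: eq_bigr => i _.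
rewrite (bigD1 (blk i)) //= big1 => [|j /negbTE ne]; rewrite !mxE.
  by rewrite eqxx addr0.
by rewrite eq_sym ne mulr0.
Qed.

Lemma dotv_block_part j g h :
  dotv g (block_part j h) = dotv (block_part j g) (block_part j h).
Proof. by apply: eq_bigr => i _; rewrite !mxE; case: ifP; rewrite ?mulr0. Qed.

Lemma sqnorm_block_split h : sqnorm h = \sum_j sqnorm (block_part j h).
Proof.
by rewrite /sqnorm dotv_block_split; apply: eq_bigr => j _; rewrite dotv_block_part.
Qed.

Lemma blocksq_block_part j g : blocksq blk j g = sqnorm (block_part j g).
Proof.
rewrite /blocksq /sqnorm /dotv big_mkcond /=; apply: eq_bigr => i _.
by rewrite !mxE; case: ifP; rewrite ?mulr0 // expr2.
Qed.

Variables (f : 'rV[R]_d -> R) (Q : 'I_m -> 'M[R]_d).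
Hypotheses (df : forall z, differentiable f z) (Q_psd : forall j, psd (Q j))
  (f_lip : block_lipschitz f Q).

(* Along the segment, the derivative excess is bounded
   by Young's inequality and the Q^j-Lipschitz bound, which is affine in the
   position on the segment by convexity of the psd form Q^j. *)
Lemma block_increment_le (j : 'I_m) x h (al : R) : 0 < al ->
  f (x + tail_blocks j h) - f (x + tail_blocks j.+1 h)
    - dotv (grad f x) (block_part j h) <=
  (al * sqnorm (block_part j h) +
   (qnorm2 (Q j) (tail_blocks j.+1 h) + qnorm2 (Q j) (tail_blocks j h)) / (2 * al)) / 2.
Proof.
move=> al0.
set p := x + tail_blocks j.+1 h; set b := block_part j h.
set c := dotv (grad f x) b; set S := sqnorm b.
set A := qnorm2 (Q j) (tail_blocks j.+1 h); set B := qnorm2 (Q j) (tail_blocks j h).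
have := increment_le_affine (a := c + al * S / 2 + A / (2 * al)) (b := (B - A) / (2 * al))
  (fun t => is_derive_line p b t df).
have -> : p + 1 *: b = x + tail_blocks j h by rewrite scale1r /p -addrA -tail_blocksS.
rewrite scale0r addr0 -/p => incr.
suff dphi_le t : 0 <= t <= 1 ->
    'D_b f (p + t *: b) <= c + al * S / 2 + A / (2 * al) + (B - A) / (2 * al) * t.
  have := incr dphi_le.
  have -> : c + al * S / 2 + A / (2 * al) + (B - A) / (2 * al) / 2 =
      c + (al * S + (A + B) / (2 * al)) / 2 by field; rewrite gt_eqF.
  lra.
move=> t01; rewrite derive_grad //.
have -> : dotv (grad f (p + t *: b)) b = dotv (grad f (p + t *: b) - grad f x) b + c.
  by rewrite dotvBl subrK.
rewrite dotv_block_part -/b.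
set g := block_part j _.
have young := dotv_young g b al0; rewrite -/S -blocksq_block_part in young.
have lip := f_lip j (p + t *: b) x.
have on_segment : p + t *: b - x = (1 - t) *: tail_blocks j.+1 h + t *: tail_blocks j h.
  by rewrite -tail_blocks_segment /p /b; apply/rowP => i; rewrite !mxE; ring.
rewrite on_segment in lip.
have cvx := qnorm2_convex (tail_blocks j.+1 h) (tail_blocks j h) (Q_psd j) t01.
have lip_al : blocksq blk j (grad f (p + t *: b) - grad f x) / al <=
              ((1 - t) * A + t * B) / al.
  by apply: ler_wpM2r; [rewrite invr_ge0 ltW | exact: le_trans cvx].
have -> : c + al * S / 2 + A / (2 * al) + (B - A) / (2 * al) * t =
    c + (al * S + ((1 - t) * A + t * B) / al) / 2 by field; rewrite gt_eqF.
lra.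
Qed.

(* Summing the block increments (a telescoping sum from tail_0 h = y - x down
   to tail_m h = 0) gives a descent inequality with a free Young parameter. *)
Lemma descent_young x y (al : R) : 0 < al ->
  f y - f x - dotv (grad f x) (y - x) <=
  (al * sqnorm (y - x) + qnorm2 (Qtilde blk Q) (y - x) / (2 * al)) / 2.
Proof.
move=> al0; set h := y - x.
have telescope : f y - f x =
    \sum_(j < m) (f (x + tail_blocks j h) - f (x + tail_blocks j.+1 h)).
  have := @telescope_sumr _ 0 m (fun k => f (x + tail_blocks k h)) (leq0n m).
  have -> : x + tail_blocks 0 h = y by rewrite tail_blocks0 /h addrC subrK.
  rewrite big_mkord /= tail_blocks_last addr0 => tele.
  by rewrite -opprB -tele -sumrN; apply: eq_bigr => j _; rewrite opprB.
rewrite telescope (dotv_block_split _ h) -sumrB.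
apply: le_trans (ler_sum _ (fun j _ => block_increment_le j x h al0)) _.
rewrite -mulr_suml big_split /= -mulr_sumr -mulr_suml.
by rewrite -sqnorm_block_split -qnorm2_Qtilde.
Qed.

(* The descent lemma: if ||h||_{tilde Q}^2 <= N |h|^2, then f is L-smooth
   from above with L = sqrt (2 N); this is descent_young at al = L / 2. *)
Lemma descent_lemma (N : R) x y : 0 <= N ->
  (forall h, qnorm2 (Qtilde blk Q) h <= N * sqnorm h) ->
  f y - f x - dotv (grad f x) (y - x) <= Num.sqrt (2 * N) / 2 * sqnorm (y - x).
Proof.
move=> N0 QtN; apply: young_optimum; rewrite ?sqnorm_ge0 ?divr_ge0 ?sqrtr_ge0 //.
move=> al al0; apply: le_trans (descent_young x y al0) _.
have -> : (Num.sqrt (2 * N) / 2) ^+ 2 = N / 2.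
  by rewrite expr_div_n sqr_sqrtr ?mulr_ge0 //; field.
have : qnorm2 (Qtilde blk Q) (y - x) / (2 * al) <= N * sqnorm (y - x) / (2 * al).
  by apply: ler_wpM2r; [rewrite invr_ge0 mulr_ge0 ?ltW | exact: QtN].
have -> : N / 2 * sqnorm (y - x) / al = N * sqnorm (y - x) / (2 * al).
  by field; rewrite gt_eqF.
lra.
Qed.

End Blocks.

Section Average.
Variables (R : realType) (d m n : nat) (blk : 'I_d -> 'I_m).
Variable F : 'I_n -> 'rV[R]_d -> R.
Hypothesis dF : forall t x, differentiable (F t) x.

Definition average (x : 'rV[R]_d) : R := n%:R^-1 * \sum_(t < n) F t x.

Lemma averageE : average = n%:R^-1 \*: \sum_(t < n) F t.
Proof. by apply/funext => x; rewrite /average /= fct_sumE. Qed.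

Lemma average_convex : (forall t, convex_fun (F t)) -> convex_fun average.
Proof.
move=> F_cvx x y a a01; rewrite /average mulrCA [(1 - a) * _]mulrCA -mulrDr.
apply: ler_wpM2l; first by rewrite invr_ge0 ler0n.
rewrite !mulr_sumr -big_split /=; apply: ler_sum => t _; exact: F_cvx.
Qed.

Lemma average_differentiable x : differentiable average x.
Proof.
by rewrite averageE; apply: differentiableZ; apply: differentiable_sum => t.
Qed.

Lemma grad_average x : grad average x = n%:R^-1 *: \sum_(t < n) grad (F t) x.
Proof.
apply/rowP => i; rewrite !mxE averageE deriveZ; last first.
  by apply: derivable_sum => t; exact: diff_derivable.
rewrite derive_sum; last by move=> t; exact: diff_derivable.
by rewrite summxE; congr (_ * _); apply: eq_bigr => t _; rewrite mxE.
Qed.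

Hypothesis n_gt0 : (0 < n)%N.

Lemma blocksq_average_le (j : 'I_m) (u : 'I_n -> 'rV[R]_d) :
  blocksq blk j (n%:R^-1 *: \sum_t u t) <= n%:R^-1 * \sum_t blocksq blk j (u t).
Proof.
rewrite /blocksq exchange_big /= mulr_sumr; apply: ler_sum => i _.
by rewrite !mxE summxE; exact: sqr_mean_le.
Qed.

Lemma average_block_lipschitz (Q : 'I_m -> 'M[R]_d) :
  (forall t, block_lipschitz blk (F t) Q) -> block_lipschitz blk average Q.
Proof.
move=> F_lip j x y; rewrite !grad_average -scalerBr -sumrB.
apply: le_trans (blocksq_average_le j _) _.
rewrite mulrC ler_pdivrMr ?ltr0n // mulr_natr -[X in _ *+ X]card_ord -sumr_const.
by apply: ler_sum => t _; apply: F_lip.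
Qed.

End Average.

Section Cocoercivity.
Variables (R : realType) (d : nat) (f : 'rV[R]_d -> R) (L : R).
Hypotheses (f_cvx : convex_fun f) (df : forall z, differentiable f z).
Hypothesis f_smooth : forall x y,
  f y - f x - dotv (grad f x) (y - x) <= L / 2 * sqnorm (y - x).

Definition bregman x y : R := f y - f x - dotv (grad f x) (y - x).

(* Convexity at x tested at w = y - s g, g = grad f y - grad f x, combined with
   the smoothness bound from y to w. *)
Lemma bregman_ge_step x y (s : R) :
  s * sqnorm (grad f y - grad f x) - L / 2 * s ^+ 2 * sqnorm (grad f y - grad f x)
  <= bregman x y.
Proof.
set g := grad f y - grad f x; set w := y - s *: g.
have cvx := convex_first_order w f_cvx (df x).
have smooth := f_smooth y w.
have wy : w - y = (- s) *: g by rewrite /w addrC addKr scaleNr.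
have wx : w - x = (y - x) - s *: g by rewrite /w addrAC.
rewrite wy in smooth; rewrite wx in cvx.
rewrite sqnormZ dotvZr sqrrN in smooth; rewrite dotvBr dotvZr in cvx.
have gg : dotv (grad f y) g - dotv (grad f x) g = sqnorm g by rewrite -dotvBl.
rewrite /bregman; nra.
Qed.

(* Cocoercivity: |grad f y - grad f x|^2 <= 2 L D_f(x, y); take s = 1 / L,
   or let s -> +oo when L = 0. *)
Lemma cocoercive x y : 0 <= L ->
  sqnorm (grad f y - grad f x) <= 2 * L * bregman x y.
Proof.
move=> L0; have step := bregman_ge_step x y; set g := grad f y - grad f x in step *.
have g0 := sqnorm_ge0 g.
have [Lp|] := ltrP 0 L.
  have -> : sqnorm g = 2 * L * (L^-1 * sqnorm g - L / 2 * L^-1 ^+ 2 * sqnorm g).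
    by field; rewrite gt_eqF.
  by apply: ler_wpM2l; [rewrite mulr_ge0 // ltW | exact: step].
move=> L_le0; have L_eq0 : L = 0 by apply/le_anti; rewrite L_le0 L0.
rewrite L_eq0 mulr0 mul0r; have [//|g_gt0] := lerP (sqnorm g) 0.
have := step ((`|bregman x y| + 1) / sqnorm g).
rewrite L_eq0 !mul0r subr0 divfK ?gt_eqF //.
by have := ler_norm (bregman x y); lra.
Qed.

End Cocoercivity.

Unset Implicit Arguments.
Local Close Scope classical_set_scope.

Theorem lemma4 (R : realType) (d m n : nat) (blk : 'I_d -> 'I_m)
  (F : 'I_n -> 'rV[R]_d -> R) (Q : 'I_m -> 'M[R]_d) :
  (0 < n)%N ->
  consecutive_blocks blk ->
  (forall t, convex_fun (F t)) ->
  (forall t, C1 (F t)) ->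
  (forall j, psd (Q j)) ->
  (forall t j x y,
     blocksq blk j (grad (F t) x - grad (F t) y) <= qnorm2 (Q j) (x - y)) ->
  let f := fun x => n%:R^-1 * \sum_(t < n) F t x in
  let L := Num.sqrt (2 * opnorm (Qtilde blk Q)) in
  (forall j x y,
     blocksq blk j (grad f x - grad f y) <= qnorm2 (Q j) (x - y)) /\
  (forall x y,
     f y - f x <= dotv (grad f x) (y - x) + L / 2 * sqnorm (y - x)) /\
  (forall x y,
     sqnorm (grad f y - grad f x)
       <= 2 * L * (f y - f x - dotv (grad f x) (y - x))).
Proof.
move=> n_gt0 _ F_cvx F_C1 Q_psd F_lip f L.
have dF t x : differentiable (F t) x by case: (F_C1 t).
have df := average_differentiable dF.
have f_lip : block_lipschitz blk f Q := average_block_lipschitz dF n_gt0 F_lip.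
have f_smooth x y : f y - f x - dotv (grad f x) (y - x) <= L / 2 * sqnorm (y - x).
  exact: descent_lemma df Q_psd f_lip _ _ _ (opnorm_ge0 _) (qnorm2_le_opnorm _).
split; first exact: f_lip.
split=> x y; first by have := f_smooth x y; lra.
exact: cocoercive (average_convex F_cvx) df f_smooth x y (sqrtr_ge0 _).
Qed.
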